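(* For every $k\in\mathcal K$, the map $S\to\mathbb Z$, $s\mapsto d_k^{ur,\dagger}(s)$, is odd dominant.
   Context: Fix a prime $p\ge7$ and $k_0\in\{2,\dots,p\}$. $\{n\}$ is the residue of $n$ mod $p-1$ in $\{0,\dots,p-2\}$. $\mathcal K=\{k\ge2:k\equiv k_0\pmod{p-1}\}$, $k_\bullet=(k-k_0)/(p-1)$. For $s\in\{0,\dots,p-2\}$: $a_s=\{k_0-2-2s\}$, $\delta_s=\lfloor\frac{s+\{a_s+s\}}{p-1}\rfloor$; if $a_s+s<p-1$, $t_1^{(s)}=s+\delta_s$, $t_2^{(s)}=a_s+s+\delta_s+2$; otherwise $t_1^{(s)}=\{a_s+s\}+\delta_s+1$, $t_2^{(s)}=s+\delta_s+1$. For $k\in\mathcal K$: $d_k^{ur,\dagger}(s)=\lfloor\frac{k_\bullet-t_1^{(s)}}{p+1}\rfloor+\lfloor\frac{k_\bullet-t_2^{(s)}}{p+1}\rfloor+2+\delta_s$. $S=\{\lceil\frac{k_0+1}{2}\rceil,\dots,\lfloor\frac{k_0+p-4}{2}\rfloor\}$. For $\phi:S\to\mathbb Z$, a pair $s<s'$ in $S$ is $\phi$-regular if $|\phi(s)-\phi(s')|\le1$ and, whenever $\phi(s)\neq\phi(s')$, $\phi(s')$ is odd; $\phi$ is odd dominant if every pair $s<s'$ in $S$ is $\phi$-regular. *)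

From mathcomp Require Import all_boot all_order all_algebra.
Set Implicit Arguments. Unset Strict Implicit. Unset Printing Implicit Defensive.
Import Order.TTheory GRing.Theory Num.Theory.
Local Open Scope ring_scope.

Definition resid (p : nat) (n : int) : int := (n %% (p.-1)%:Z)%Z.

Definition a_s (p k0 s : nat) : int := resid p (k0%:Z - 2 - 2 * s%:Z).

Definition delta_s (p k0 s : nat) : int :=
  ((s%:Z + resid p (a_s p k0 s + s%:Z)) %/ (p.-1)%:Z)%Z.

Definition t1 (p k0 s : nat) : int :=
  if a_s p k0 s + s%:Z < (p.-1)%:Z then s%:Z + delta_s p k0 s
  else resid p (a_s p k0 s + s%:Z) + delta_s p k0 s + 1.

Definition t2 (p k0 s : nat) : int :=
  if a_s p k0 s + s%:Z < (p.-1)%:Z then a_s p k0 s + s%:Z + delta_s p k0 s + 2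
  else s%:Z + delta_s p k0 s + 1.

Definition kbullet (p k0 k : nat) : int := ((k%:Z - k0%:Z) %/ (p.-1)%:Z)%Z.

Definition d_ur (p k0 k s : nat) : int :=
  ((kbullet p k0 k - t1 p k0 s) %/ (p.+1)%:Z)%Z
  + ((kbullet p k0 k - t2 p k0 s) %/ (p.+1)%:Z)%Z + 2 + delta_s p k0 s.

(* S = {ceil((k0+1)/2), ..., floor((k0+p-4)/2)} *)
Definition in_S (p k0 s : nat) : bool :=
  ((k0 + 2)./2 <= s <= (k0 + p - 4)./2)%N.

Definition phi_regular (phi : nat -> int) (s s' : nat) : Prop :=
  `|phi s - phi s'| <= 1 /\ (phi s <> phi s' -> ~~ (2 %| phi s')%Z).

Definition odd_dominant (S : nat -> bool) (phi : nat -> int) : Prop :=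
  forall s s', S s -> S s' -> (s < s')%N -> phi_regular phi s s'.

From mathcomp Require Import all_boot all_order all_algebra.
From mathcomp Require Import zify.
Import Order.TTheory GRing.Theory Num.Theory.

(* For s in S both branches of the definition of t1, t2 give
     d(s) = floor((k• - 1 - s)/(p+1)) + floor((k• - k0 + 1 + s)/(p+1)) + 2.
   As s grows the first numerator decreases and the second increases, and for
   s < s' in S the four numerators lie in a window of length p - 2 < p + 1.
   Hence their floors are a <= b <= c <= d <= a + 1 with d(s') = a + d + 2 and
   d(s) = b + c + 2: these differ by at most one, and if they differ then
   d = a + 1, so d(s') is odd. *)

Local Open Scope ring_scope.

Lemma divz_window (q x y : int) : 0 < q -> x <= y -> y < x + q ->
  (x %/ q)%Z <= (y %/ q)%Z <= (x %/ q)%Z + 1.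
Proof.
move=> q_gt0 le_xy lt_yxq; apply/andP; split; first by apply: lez_pdiv2r; lia.
have : (y %/ q)%Z <= ((1 * q + x) %/ q)%Z by apply: lez_pdiv2r; lia.
by rewrite divzMDl ?gt_eqF // addrC.
Qed.

Lemma sum_inner_outer_regular {a b c d : int} :
  a <= b -> b <= c -> c <= d -> d <= a + 1 ->
  `|(b + c) - (a + d)| <= 1 /\ (b + c <> a + d -> ~~ (2 %| a + d)%Z).
Proof. lia. Qed.

Lemma in_S_bounds (p k0 s : nat) : in_S p k0 s ->
  (k0 + 1 <= 2 * s)%N /\ (2 * s <= k0 + p - 4)%N.
Proof.
move=> /andP[lo hi].
have e1 := odd_double_half (k0 + 2).
have e2 := odd_double_half (k0 + p - 4).
rewrite -!muln2 oddD addbF in e1 e2.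
move: e1 (leq_b1 (odd k0)) (leq_b1 (odd (k0 + p - 4))); case: (odd k0) => /=; lia.
Qed.

Section DurOnS.

Variables p k0 k s : nat.
Hypothesis p_ge7 : (7 <= p)%N.
Hypothesis k0_range : (2 <= k0 <= p)%N.
Hypothesis s_lo : (k0 + 1 <= 2 * s)%N.
Hypothesis s_hi : (2 * s <= k0 + p - 4)%N.

Lemma a_s_in_S : a_s p k0 s = k0%:Z + p%:Z - 3 - 2 * s%:Z.
Proof.
rewrite /a_s /resid.
have -> : k0%:Z - 2 - 2 * s%:Z = (-1) * (p.-1)%:Z + (k0%:Z + p%:Z - 3 - 2 * s%:Z)
  by lia.
by rewrite modzMDl modz_small //; lia.
Qed.

Let kb := kbullet p k0 k.

Lemma d_ur_in_S : d_ur p k0 k s =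
  ((kb - 1 - s%:Z) %/ (p.+1)%:Z)%Z + ((kb - k0%:Z + 1 + s%:Z) %/ (p.+1)%:Z)%Z + 2.
Proof.
have q_neq0 : (p.+1)%:Z != 0 by lia.
rewrite /d_ur /t1 /t2 -/kb.
case: (leqP (s + 2) k0) => hs.
- have res_as : resid p (a_s p k0 s + s%:Z) = k0%:Z - 2 - s%:Z.
    rewrite /resid a_s_in_S.
    have -> : k0%:Z + p%:Z - 3 - 2 * s%:Z + s%:Z = (k0%:Z - 2 - s%:Z) + (p.-1)%:Z
      by lia.
    by rewrite modzDr modz_small //; lia.
  have delta0 : delta_s p k0 s = 0 by rewrite /delta_s res_as divz_small //; lia.
  have -> : (a_s p k0 s + s%:Z < (p.-1)%:Z) = false by rewrite a_s_in_S; lia.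
  rewrite res_as delta0.
  have -> : kb - (k0%:Z - 2 - s%:Z + 0 + 1) = kb - k0%:Z + 1 + s%:Z by lia.
  have -> : kb - (s%:Z + 0 + 1) = kb - 1 - s%:Z by lia.
  lia.
- have res_as : resid p (a_s p k0 s + s%:Z) = k0%:Z + p%:Z - 3 - s%:Z.
    by rewrite /resid a_s_in_S modz_small //; lia.
  have delta1 : delta_s p k0 s = 1.
    rewrite /delta_s res_as.
    have -> : s%:Z + (k0%:Z + p%:Z - 3 - s%:Z) = 1 * (p.-1)%:Z + (k0%:Z - 2) by lia.
    by rewrite divzMDl ?divz_small //; lia.
  have -> : (a_s p k0 s + s%:Z < (p.-1)%:Z) = true by rewrite a_s_in_S; lia.
  rewrite delta1 a_s_in_S.
  have -> : kb - (s%:Z + 1) = kb - 1 - s%:Z by lia.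
  have -> : kb - (k0%:Z + p%:Z - 3 - 2 * s%:Z + s%:Z + 1 + 2)
     = (-1) * (p.+1)%:Z + (kb - k0%:Z + 1 + s%:Z) by lia.
  by rewrite divzMDl //; lia.
Qed.

End DurOnS.

Theorem mainTheorem8 (p k0 k : nat) :
  prime p -> (7 <= p)%N -> (2 <= k0 <= p)%N ->
  (2 <= k)%N -> k = k0 %[mod p.-1] ->
  odd_dominant (in_S p k0) (d_ur p k0 k).
Proof.
move=> _ p_ge7 k0_range _ _ s s' /in_S_bounds[s_lo s_hi] /in_S_bounds[s'_lo s'_hi] lt_ss'.
rewrite /phi_regular !d_ur_in_S //.
set kb := kbullet p k0 k.
have window (x y : int) : x <= y -> y < x + (p.+1)%:Z ->
    (x %/ (p.+1)%:Z)%Z <= (y %/ (p.+1)%:Z)%Z <= (x %/ (p.+1)%:Z)%Z + 1.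
  by apply: divz_window; lia.
have /andP[le_ab _] := window (kb - 1 - s'%:Z) (kb - 1 - s%:Z) ltac:(lia) ltac:(lia).
have /andP[le_bc _] :=
  window (kb - 1 - s%:Z) (kb - k0%:Z + 1 + s%:Z) ltac:(lia) ltac:(lia).
have /andP[le_cd _] :=
  window (kb - k0%:Z + 1 + s%:Z) (kb - k0%:Z + 1 + s'%:Z) ltac:(lia) ltac:(lia).
have /andP[_ le_da1] :=
  window (kb - 1 - s'%:Z) (kb - k0%:Z + 1 + s'%:Z) ltac:(lia) ltac:(lia).
move: le_ab le_bc le_cd le_da1.
set a := ((kb - 1 - s'%:Z) %/ _)%Z; set b := ((kb - 1 - s%:Z) %/ _)%Z.
set c := ((kb - k0%:Z + 1 + s%:Z) %/ _)%Z; set d := ((kb - k0%:Z + 1 + s'%:Z) %/ _)%Z.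
move=> le_ab le_bc le_cd le_da1.
have [dist parity] := sum_inner_outer_regular le_ab le_bc le_cd le_da1.
clearbody a b c d.
split; first by move: dist; lia.
by move=> neq; move: (parity ltac:(lia)); lia.
Qed.
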